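(* If $b$ is a super-core of a length-preserving function $f:\{0,1\}^n\to\{0,1\}^n$ computable by polynomial-size circuits, then $g(x):=f(x)b(x)$ (concatenation, $g:\{0,1\}^n\to\{0,1\}^{n+1}$) is a super-bit.
   Context: A predicate $b$ computable by polynomial-size circuits is a super-core of $f:\{0,1\}^n\to\{0,1\}^{m(n)}$ if there do not exist a nondeterministic polynomial-size circuit family $\mathcal{A}_1$ (accepting iff some witness gives output 1), a co-nondeterministic polynomial-size circuit family $\mathcal{A}_2$ (rejecting iff some witness gives output 0), a polynomial $p$ and infinitely many $n$ such that either $\Pr_{x\in\{0,1\}^n}[\mathcal{A}_1(f(x),1^n)=b(x)=0]+\tfrac12\Pr_{y\in\{0,1\}^{m(n)}}[\mathcal{A}_1(y,1^n)=1]\ge \tfrac12+\tfrac1{p(n)}$ or $\Pr_{x}[\mathcal{A}_2(f(x),1^n)=b(x)=1]+\tfrac12\Pr_{y}[\mathcal{A}_2(y,1^n)=0]\ge \tfrac12+\tfrac1{p(n)}$. A generator $g:\{0,1\}^n\to\{0,1\}^{n+1}$ computable by polynomial-size circuits is a super-bit if for every nondeterministic polynomial-size circuit family $D$, every polynomial $p$ and all sufficiently large $n$, $\Pr[D(U_{n+1})=1]-\Pr[D(g(U_n))=1]<1/p(n)$, where $U_k$ is uniform on $\{0,1\}^k$. *)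

From mathcomp Require Import all_boot all_order all_algebra.
Set Implicit Arguments. Unset Strict Implicit. Unset Printing Implicit Defensive.
Import Order.TTheory GRing.Theory Num.Theory.
Local Open Scope ring_scope.

Definition peval (cs : seq nat) (n : nat) : nat :=
  \sum_(i < size cs) (nth 0%N cs i * n ^ i)%N.

(* Boolean circuits as straight-line programs.  Wires 0..k-1 are the inputs,
   gate number j defines wire k+j; a reference to a non-existing wire reads 0. *)
Inductive gate : Type :=
| GConst of bool
| GNot of nat
| GAnd of nat & nat
| GOr of nat & nat.

Record circuit : Type := Circuit { gates : seq gate; outs : seq nat }.

Definition eval_gate (ws : seq bool) (g : gate) : bool :=
  match g with
  | GConst c => c
  | GNot i => ~~ nth false ws i
  | GAnd i j => nth false ws i && nth false ws j
  | GOr i j => nth false ws i || nth false ws j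
  end.

Definition eval_wires (gs : seq gate) (inp : seq bool) : seq bool :=
  foldl (fun ws g => rcons ws (eval_gate ws g)) inp gs.

Definition circ_eval (C : circuit) (x : seq bool) : seq bool :=
  [seq nth false (eval_wires (gates C) x) i | i <- outs C].

Definition circ_eval1 (C : circuit) (x : seq bool) : bool :=
  head false (circ_eval C x).

Definition csize (C : circuit) : nat := (size (gates C) + size (outs C))%N.

Definition poly_computable (m : nat -> nat)
    (f : forall n, n.-tuple bool -> (m n).-tuple bool) : Prop :=
  exists (q : seq nat) (C : nat -> circuit), forall n,
    (csize (C n) <= peval q n)%N /\
    forall x : n.-tuple bool, circ_eval (C n) x = val (f n x).

Definition poly_computable_pred (b : forall n, n.-tuple bool -> bool) : Prop :=
  exists (q : seq nat) (C : nat -> circuit), forall n,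
    (csize (C n) <= peval q n)%N /\
    forall x : n.-tuple bool, circ_eval (C n) x = [:: b n x].

(* A (co-)nondeterministic circuit family: for each index n (the 1^n input),
   a circuit reading the input followed by a witness of length wit n. *)
Record nd_family : Type := NDFamily { ndc : nat -> circuit; wit : nat -> nat }.

Definition nd_poly_size (A : nd_family) : Prop :=
  exists q : seq nat, forall n, (csize (ndc A n) + wit A n <= peval q n)%N.

Definition nd_out (A : nd_family) (n : nat) (y : seq bool) : bool :=
  [exists w : (wit A n).-tuple bool, circ_eval1 (ndc A n) (y ++ val w)].

Definition cond_out (A : nd_family) (n : nat) (y : seq bool) : bool :=
  [forall w : (wit A n).-tuple bool, circ_eval1 (ndc A n) (y ++ val w)].

Definition Pr (k : nat) (P : pred (k.-tuple bool)) : rat :=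
  (#|[pred x : k.-tuple bool | P x]|%:R / (2 ^ k)%:R).

Definition is_super_core (m : nat -> nat)
    (f : forall n, n.-tuple bool -> (m n).-tuple bool)
    (b : forall n, n.-tuple bool -> bool) : Prop :=
  poly_computable_pred b /\
  ~ (exists (A1 A2 : nd_family) (p : seq nat),
       nd_poly_size A1 /\ nd_poly_size A2 /\
       forall N : nat, exists n : nat, (N <= n)%N /\ (0 < peval p n)%N /\
         ( Pr (fun x : n.-tuple bool =>
                 (nd_out A1 n (f n x) == false) && (b n x == false))
             + 2^-1 * Pr (fun y : (m n).-tuple bool => nd_out A1 n y)
             >= 2^-1 + (peval p n)%:R^-1
         \/
           Pr (fun x : n.-tuple bool => cond_out A2 n (f n x) && b n x)
             + 2^-1 * Pr (fun y : (m n).-tuple bool => ~~ cond_out A2 n y)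
             >= 2^-1 + (peval p n)%:R^-1)).

Definition is_super_bit (g : forall n, n.-tuple bool -> n.+1.-tuple bool) : Prop :=
  @poly_computable (fun n => n.+1) g /\
  forall D : nd_family, nd_poly_size D ->
  forall p : seq nat, exists N : nat, forall n : nat, (N <= n)%N ->
    (0 < peval p n)%N ->
    Pr (fun y : n.+1.-tuple bool => nd_out D n y)
      - Pr (fun x : n.-tuple bool => nd_out D n (g n x))
      < (peval p n)%:R^-1.

Definition concat_bit (f : forall n, n.-tuple bool -> n.-tuple bool)
    (b : forall n, n.-tuple bool -> bool) : forall n, n.-tuple bool -> n.+1.-tuple bool :=
  fun n x => rcons_tuple (f n x) (b n x).

From mathcomp Require Import all_boot all_order all_algebra.
From mathcomp Require Import zify ring lra.
From Stdlib Require Import Classical.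
Set Implicit Arguments. Unset Strict Implicit. Unset Printing Implicit Defensive.
Import Order.TTheory GRing.Theory Num.Theory.

(* Computability of g is a parallel composition of the circuits for f and b.
   For pseudorandomness we argue by contraposition.  Given a nondeterministic
   distinguisher D for g with advantage eps on infinitely many n, build
     - nd_last0 D,   nondeterministic:     accepts y  iff  D accepts y0;
     - cond_last1 D, co-nondeterministic:  rejects y  iff  D accepts y1;
   both realised by moving the last input bit into the witness.  A counting
   argument (splitting {0,1}^(n+1) by the last bit, and partitioning {0,1}^n
   according to which of three disjoint events occurs) shows that the two
   super-core quantities for these two circuits add up to exactly 1 + advantage(D).
   Hence one of them is at least 1/2 + eps/2, contradicting the super-core
   property of b. *)

Lemma peval_nil n : peval [::] n = 0%N.
Proof. by rewrite /peval big_ord0. Qed.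

Lemma peval_cons c cs n : peval (c :: cs) n = (c + n * peval cs n)%N.
Proof.
rewrite /peval /= big_ord_recl /= expn0 muln1; congr (_ + _)%N.
by rewrite big_distrr /=; apply: eq_bigr => i _; rewrite expnS mulnCA.
Qed.

Lemma peval_const k n : peval [:: k] n = k.
Proof. by rewrite peval_cons peval_nil muln0 addn0. Qed.

Fixpoint padd (s t : seq nat) : seq nat :=
  match s, t with
  | [::], _ => t
  | _, [::] => s
  | a :: s', c :: t' => (a + c)%N :: padd s' t'
  end.

Lemma peval_padd s t n : peval (padd s t) n = (peval s n + peval t n)%N.
Proof.
elim: s t => [|a s IH] [|c t] //=; rewrite ?peval_nil ?addn0 //.
by rewrite !peval_cons IH mulnDr; lia.
Qed.

Lemma eval_wires_cat gs1 gs2 inp :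
  eval_wires (gs1 ++ gs2) inp = eval_wires gs2 (eval_wires gs1 inp).
Proof. by rewrite /eval_wires foldl_cat. Qed.

Lemma size_eval_wires gs inp : size (eval_wires gs inp) = (size inp + size gs)%N.
Proof.
elim: gs inp => [|g gs IH] inp /=; first by rewrite addn0.
by rewrite IH size_rcons addSnnS.
Qed.

Lemma eval_wires_prefix gs inp : exists r, eval_wires gs inp = inp ++ r.
Proof.
elim: gs inp => [|g gs IH] inp /=; first by exists [::]; rewrite cats0.
have [r ->] := IH (rcons inp (eval_gate inp g)).
by exists (eval_gate inp g :: r); rewrite cat_rcons.
Qed.

Lemma eval_wires_split gs inp :
  eval_wires gs inp = inp ++ drop (size inp) (eval_wires gs inp).
Proof. by have [r ->] := eval_wires_prefix gs inp; rewrite drop_size_cat. Qed.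

Lemma nth_eval_wires gs inp i : (i < size inp)%N ->
  nth false (eval_wires gs inp) i = nth false inp i.
Proof. by move=> Hi; have [r ->] := eval_wires_prefix gs inp; rewrite nth_cat Hi. Qed.

(* Relocating a circuit with n inputs and at most m gates so that `off` extra
   wires are inserted after its inputs; dangling references are sent to a
   wire beyond everything, so they keep reading 0. *)
Definition shift_wire (n off m i : nat) : nat :=
  if (i < n)%N then i else if (i < n + m)%N then (i + off)%N else (n + off + m)%N.

Definition shift_gate n off m (g : gate) : gate :=
  match g with
  | GConst c => GConst c
  | GNot i => GNot (shift_wire n off m i)
  | GAnd i j => GAnd (shift_wire n off m i) (shift_wire n off m j)
  | GOr i j => GOr (shift_wire n off m i) (shift_wire n off m j)
  end.

Lemma nth_shift_wire n off m x mid r i :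
  size x = n -> size mid = off -> (size r <= m)%N ->
  nth false (x ++ mid ++ r) (shift_wire n off m i) = nth false (x ++ r) i.
Proof.
move=> Hx Hm Hr; rewrite /shift_wire; case: ifP => H1; first by rewrite !nth_cat Hx H1.
case: ifP => H2.
  rewrite !nth_cat Hx H1 ifF; last by lia.
  by rewrite Hm ifF; [congr nth; lia | lia].
by rewrite !nth_default // !size_cat; lia.
Qed.

Lemma eval_wires_shift n off m x mid gs r :
  size x = n -> size mid = off -> (size r + size gs <= m)%N ->
  eval_wires (map (shift_gate n off m) gs) (x ++ mid ++ r)
  = x ++ mid ++ drop n (eval_wires gs (x ++ r)).
Proof.
move=> Hx Hm; elim: gs r => [|g gs IH] r Hr /=; first by rewrite -Hx drop_size_cat.
have Hr' : (size r <= m)%N by move: Hr => /=; lia.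
have Hg : eval_gate (x ++ mid ++ r) (shift_gate n off m g) = eval_gate (x ++ r) g.
  by case: g {Hr} => [c|i|i j|i j] /=; rewrite ?nth_shift_wire.
by rewrite Hg !rcons_cat IH // size_rcons; move: Hr => /=; lia.
Qed.

Definition par_circuit n (Cf Cb : circuit) : circuit :=
  let sf := size (gates Cf) in let sb := size (gates Cb) in
  Circuit (gates Cf ++ map (shift_gate n sf sb) (gates Cb))
    (map (fun i => if (i < n + sf)%N then i else (n + sf + sb)%N) (outs Cf)
       ++ map (shift_wire n sf sb) (outs Cb)).

Lemma size_par_circuit n Cf Cb :
  csize (par_circuit n Cf Cb) = (csize Cf + csize Cb)%N.
Proof. by rewrite /csize /= !size_cat !size_map; lia. Qed.

Lemma eval_par_circuit n Cf Cb x : size x = n ->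
  circ_eval (par_circuit n Cf Cb) x = circ_eval Cf x ++ circ_eval Cb x.
Proof.
move=> Hx; rewrite /circ_eval /par_circuit /= eval_wires_cat map_cat.
set wf := eval_wires (gates Cf) x.
have Hwf : wf = x ++ drop n wf ++ [::] by rewrite cats0 -Hx -eval_wires_split.
have Hsf : size (drop n wf) = size (gates Cf).
  by rewrite size_drop size_eval_wires Hx; lia.
have -> : eval_wires (map (shift_gate n (size (gates Cf)) (size (gates Cb))) (gates Cb)) wf
    = x ++ drop n wf ++ drop n (eval_wires (gates Cb) (x ++ [::])).
  by rewrite {1}Hwf eval_wires_shift.
rewrite cats0 -!map_comp.
set wb := eval_wires (gates Cb) x.
have Hsb : size (drop n wb) = size (gates Cb).
  by rewrite size_drop size_eval_wires Hx; lia.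
congr (_ ++ _); apply: eq_map => i /=.
  rewrite {2}Hwf cats0 catA; case: ifP => Hi; first by rewrite nth_cat size_cat Hx Hsf Hi.
  by rewrite !nth_default // ?size_cat; lia.
by rewrite nth_shift_wire ?Hsb // {2}/wb (eval_wires_split (gates Cb) x) Hx.
Qed.

Lemma concat_bit_poly_computable f b :
  @poly_computable (fun n => n) f -> poly_computable_pred b ->
  @poly_computable (fun n => n.+1) (concat_bit f b).
Proof.
move=> [qf [Cf HCf]] [qb [Cb HCb]].
exists (padd qf qb), (fun n => par_circuit n (Cf n) (Cb n)) => n.
have [Hf1 Hf2] := HCf n; have [Hb1 Hb2] := HCb n.
split; first by rewrite size_par_circuit peval_padd; lia.
by move=> x; rewrite eval_par_circuit ?size_tuple // Hf2 Hb2 /= cats1.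
Qed.

(* From a nondeterministic distinguisher D on n+1 bits we build two circuit
   families on n bits.  Both read y ++ c :: w = rcons y c ++ w, i.e. the
   first witness bit c plays the role of the last input bit of D. *)
Section AdaptedDistinguishers.
Variable D : nd_family.

Let nd_inputs n := (n.+1 + wit D n)%N.
Let nd_wires n := (nd_inputs n + size (gates (ndc D n)))%N.

(* the wire holding D's output, or a wire that always reads 0 *)
Let nd_outwire n := match outs (ndc D n) with
  | o :: _ => if (o < nd_wires n)%N then o else (nd_wires n).+1
  | [::] => (nd_wires n).+1 end.

(* accepts y iff some witness (c, w) has c = 0 and D accepts y0 with w. *)
Definition nd_last0 : nd_family :=
  NDFamily (fun n => Circuit (gates (ndc D n) ++
                        [:: GNot n; GAnd (nd_outwire n) (nd_wires n)])
                     [:: (nd_wires n).+1])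
           (fun n => (wit D n).+1).

(* rejects y iff some witness (c, w) has c = 1 and D accepts y1 with w. *)
Definition cond_last1 : nd_family :=
  NDFamily (fun n => Circuit (gates (ndc D n) ++
                        [:: GNot (nd_outwire n); GNot n;
                            GOr (nd_wires n) (nd_wires n).+1])
                     [:: (nd_wires n).+2])
           (fun n => (wit D n).+1).

Lemma nd_outwire_neq n : nd_outwire n != nd_wires n.
Proof. by rewrite /nd_outwire; case: (outs _) => [|o _]; [lia | case: ifP; lia]. Qed.

Lemma eval_nd_outwire n inp : size inp = nd_inputs n ->
  circ_eval1 (ndc D n) inp
  = nth false (eval_wires (gates (ndc D n)) inp) (nd_outwire n).
Proof.
move=> Hs; rewrite /circ_eval1 /circ_eval /nd_outwire.
have Hw : size (eval_wires (gates (ndc D n)) inp) = nd_wires n.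
  by rewrite size_eval_wires Hs.
case: (outs _) => [|o os] /=; first by rewrite nth_default // Hw.
by case: ifP => // Ho; rewrite !nth_default // Hw; lia.
Qed.

Lemma nth_last_input n (y w : seq bool) c : size y = n ->
  nth false (eval_wires (gates (ndc D n)) (rcons y c ++ w)) n = c.
Proof.
move=> Hy; rewrite nth_eval_wires; last by rewrite size_cat size_rcons Hy; lia.
by rewrite nth_cat size_rcons Hy ltnSn nth_rcons Hy ltnn eqxx.
Qed.

Lemma eval_nd_last0 n (y w : seq bool) c : size y = n -> size w = wit D n ->
  circ_eval1 (ndc nd_last0 n) (y ++ c :: w)
  = ~~ c && circ_eval1 (ndc D n) (rcons y c ++ w).
Proof.
move=> Hy Hw; rewrite -cat_rcons eval_nd_outwire; last first.
  by rewrite size_cat size_rcons Hy Hw.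
rewrite /circ_eval1 /circ_eval /= eval_wires_cat /=.
have Hn := @nth_last_input n y w c Hy; set ws := eval_wires _ _ in Hn *.
have Hws : size ws = nd_wires n by rewrite size_eval_wires size_cat size_rcons Hy Hw.
rewrite !nth_rcons !size_rcons Hws !ltnn !eqxx (negbTE (nd_outwire_neq n)) Hn.
case: ifP => H; first by rewrite andbC.
by rewrite nth_default ?andbF // Hws leqNgt H.
Qed.

Lemma eval_cond_last1 n (y w : seq bool) c : size y = n -> size w = wit D n ->
  circ_eval1 (ndc cond_last1 n) (y ++ c :: w)
  = ~~ circ_eval1 (ndc D n) (rcons y c ++ w) || ~~ c.
Proof.
move=> Hy Hw; rewrite -cat_rcons eval_nd_outwire; last first.
  by rewrite size_cat size_rcons Hy Hw.
rewrite /circ_eval1 /circ_eval /= eval_wires_cat /=.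
have Hn := @nth_last_input n y w c Hy; set ws := eval_wires _ _ in Hn *.
have Hws : size ws = nd_wires n by rewrite size_eval_wires size_cat size_rcons Hy Hw.
have Hnw : (n < nd_wires n)%N by rewrite /nd_wires /nd_inputs; lia.
by rewrite !nth_rcons !size_rcons Hws !ltnn !eqxx Hnw Hn ltnSn.
Qed.

Lemma nd_out_last0 n (y : n.-tuple bool) :
  nd_out nd_last0 n y = nd_out D n (rcons y false).
Proof.
apply/existsP/existsP => [[w]|[w]]; last first.
  by exists [tuple of false :: w]; rewrite /= eval_nd_last0 ?size_tuple.
case/tupleP: w => c w; rewrite /= eval_nd_last0 ?size_tuple //.
by case/andP => /negbTE Hc H; exists w; rewrite -Hc.
Qed.

Lemma cond_out_last1 n (y : n.-tuple bool) :
  cond_out cond_last1 n y = ~~ nd_out D n (rcons y true).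
Proof.
rewrite /cond_out /nd_out negb_exists; apply/forallP/forallP => H w.
  by have := H [tuple of true :: w]; rewrite /= eval_cond_last1 ?size_tuple // orbF.
case/tupleP: w => c w; rewrite /= eval_cond_last1 ?size_tuple //.
by case: c; rewrite ?orbT // orbF; apply: H.
Qed.

(* The adaptations add a constant number of gates and one witness bit. *)
Lemma nd_poly_size_last0 : nd_poly_size D -> nd_poly_size nd_last0.
Proof.
move=> [q Hq]; exists (padd [:: 4%N] q) => n; rewrite peval_padd peval_const.
by have := Hq n; rewrite /csize /= size_cat /=; lia.
Qed.

Lemma nd_poly_size_last1 : nd_poly_size D -> nd_poly_size cond_last1.
Proof.
move=> [q Hq]; exists (padd [:: 5%N] q) => n; rewrite peval_padd peval_const.
by have := Hq n; rewrite /csize /= size_cat /=; lia.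
Qed.

End AdaptedDistinguishers.

Section Probability.
Local Open Scope ring_scope.

Lemma card_as_sum (T : finType) (P : pred T) :
  #|[pred x | P x]| = (\sum_(x : T) P x)%N.
Proof. by rewrite -sum1_card big_mkcond /=; apply: eq_bigr => x _; rewrite inE; case: (P x). Qed.

Lemma Pr_ext k (P Q : pred (k.-tuple bool)) : P =1 Q -> Pr P = Pr Q.
Proof. by move=> H; rewrite /Pr; congr (_%:R / _); apply: eq_card => x; rewrite !inE H. Qed.

(* {0,1}^(n+1) is in bijection with {0,1} x {0,1}^n via the last bit. *)
Lemma card_split_last n (P : pred (n.+1.-tuple bool)) :
  #|[pred z | P z]| = (#|[pred y : n.-tuple bool | P (rcons_tuple y false)]|
                     + #|[pred y : n.-tuple bool | P (rcons_tuple y true)]|)%N.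
Proof.
rewrite !card_as_sum.
pose h := fun p : bool * n.-tuple bool => rcons_tuple p.2 p.1.
have h_inj : injective h.
  by move=> [c y] [c' y'] /(congr1 val) /= /rcons_inj [/val_inj -> ->].
have h_bij : bijective h.
  by apply: inj_card_bij => //; rewrite card_prod !card_tuple card_bool expnS.
rewrite (reindex h) /=; last exact: onW_bij.
have -> : (\sum_(p : bool * n.-tuple bool) P (h p)
           = \sum_(c : bool) \sum_(y : n.-tuple bool) P (h (c, y)))%N.
  by rewrite pair_big /=; apply: eq_bigr => -[c y].
by rewrite big_bool /= addnC.
Qed.

Lemma Pr_split_last n (P : pred (n.+1.-tuple bool)) :
  Pr P = (Pr (fun y : n.-tuple bool => P (rcons_tuple y false))
          + Pr (fun y : n.-tuple bool => P (rcons_tuple y true))) / 2.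
Proof.
rewrite /Pr card_split_last natrD expnS natrM.
by field; rewrite pnatr_eq0 expn_eq0.
Qed.

Lemma Pr_partition3 n (e1 e2 e3 : pred (n.-tuple bool)) :
  (forall x, e1 x + e2 x + e3 x = 1)%N -> Pr e1 + Pr e2 + Pr e3 = 1.
Proof.
move=> He; rewrite /Pr -!mulrDl -!natrD !card_as_sum -!big_split /=.
rewrite (eq_bigr (fun _ => 1%N)) => [|x _]; last exact: He.
by rewrite sum1_card card_tuple card_bool divff // pnatr_eq0 -lt0n expn_gt0.
Qed.

Lemma adapted_quantities_sum (D : nd_family) n
    (f : n.-tuple bool -> n.-tuple bool) (b : n.-tuple bool -> bool) :
  (Pr (fun x => (nd_out (nd_last0 D) n (f x) == false) && (b x == false))
     + 2^-1 * Pr (fun y : n.-tuple bool => nd_out (nd_last0 D) n y))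
  + (Pr (fun x => cond_out (cond_last1 D) n (f x) && b x)
     + 2^-1 * Pr (fun y : n.-tuple bool => ~~ cond_out (cond_last1 D) n y))
  = 1 + (Pr (fun y : n.+1.-tuple bool => nd_out D n y)
         - Pr (fun x => nd_out D n (rcons (f x) (b x)))).
Proof.
rewrite (Pr_split_last (fun y => nd_out D n y)).
rewrite (@Pr_ext _ (fun x => (nd_out (nd_last0 D) n (f x) == false) && (b x == false))
           (fun x => ~~ nd_out D n (rcons (f x) false) && ~~ b x)); last first.
  by move=> x; rewrite nd_out_last0 !eqbF_neg.
rewrite (@Pr_ext _ (fun y => nd_out (nd_last0 D) n y)
           (fun y => nd_out D n (rcons y false))); last by move=> y; rewrite nd_out_last0.
rewrite (@Pr_ext _ (fun x => cond_out (cond_last1 D) n (f x) && b x)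
           (fun x => ~~ nd_out D n (rcons (f x) true) && b x)); last first.
  by move=> x; rewrite cond_out_last1.
rewrite (@Pr_ext _ (fun y => ~~ cond_out (cond_last1 D) n y)
           (fun y => nd_out D n (rcons y true))); last first.
  by move=> y; rewrite cond_out_last1 negbK.
set e1 := Pr _; set d0 := Pr _; set e2 := Pr _; set d1 := Pr _; set e3 := Pr _.
have He : e1 + e2 + e3 = 1.
  apply: Pr_partition3 => x.
  by case: (b x); case: (nd_out D n (rcons (f x) true));
     case: (nd_out D n (rcons (f x) false)).
have -> : d0 = Pr (fun y : n.-tuple bool => nd_out D n (rcons_tuple y false)) by [].
have -> : d1 = Pr (fun y : n.-tuple bool => nd_out D n (rcons_tuple y true)) by [].
by lra.
Qed.

Lemma half_of_sum (a c e : rat) :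
  1 + e <= a + c -> 2^-1 + e / 2 <= a \/ 2^-1 + e / 2 <= c.
Proof. by move=> H; case: (lerP (2^-1 + e / 2) a); [left | right]; lra. Qed.

Lemma inv_natr_double (P : nat) : (P + P)%:R^-1 = P%:R^-1 / 2 :> rat.
Proof. by rewrite natrD -mulr2n -(mulr_natr P%:R 2) invfM. Qed.

End Probability.

Lemma not_eventually (P Q : nat -> Prop) :
  ~ (exists N, forall n, (N <= n)%N -> P n -> Q n) ->
  forall N, exists n, (N <= n)%N /\ P n /\ ~ Q n.
Proof.
move=> H N; apply: NNPP => Hno; apply: H; exists N => n HN Pn.
by apply: NNPP => Qn; apply: Hno; exists n.
Qed.

Theorem proposition6p2
  (f : forall n : nat, n.-tuple bool -> n.-tuple bool)
  (b : forall n : nat, n.-tuple bool -> bool) :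
  @poly_computable (fun n => n) f ->
  @is_super_core (fun n => n) f b ->
  is_super_bit (concat_bit f b).
Proof.
move=> f_comp [b_comp not_predictable].
split; first exact: concat_bit_poly_computable.
move=> D D_size p; apply: NNPP => D_distinguishes; apply: not_predictable.
exists (nd_last0 D), (cond_last1 D), (padd p p).
split; first exact: nd_poly_size_last0 D_size.
split; first exact: nd_poly_size_last1 D_size.
move=> N; have [n [HNn [p_pos adv_large]]] := not_eventually D_distinguishes N.
exists n; split=> //; rewrite peval_padd; split; first by lia.
rewrite inv_natr_double; apply: half_of_sum.
rewrite adapted_quantities_sum lerD2l.
by rewrite leNgt; apply/negP.
Qed.
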